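(* Let $X$ be a one-sided subshift with $\sigma(X)=X$ such that $Sp_l(X,\sigma)$ is finite and contains no periodic point of $\sigma$. Then for every $x\in Sp_l(X,\sigma)$, the point $\imath(x)$ is an isolated point of $\widetilde{X}$.
   Context: $X\subseteq\mathcal{A}^{\mathbb{N}}$ is a closed shift-invariant set over a finite alphabet $\mathcal{A}$, $\sigma$ the left shift; $Sp_l(X,\sigma)=\{x\in X: |\sigma^{-1}(\{x\})|\ge2\}$; $x$ is periodic if $\sigma^n(x)=x$ for some $n\ge1$. The cover: for $x\in X$ and $l\ge0$ let $P_l(x)=\{\mu\in\mathcal{L}(X): |\mu|=l,\ \mu x\in X\}$. Let $\mathcal{I}=\{(k,l)\in\mathbb{N}^2: k\le l\}$, ordered by $(k,l)\preceq(k',l')$ iff $k\le k'$ and $l-k\le l'-k'$. For $(k,l)\in\mathcal{I}$ write $x\overset{k,l}{\sim}y$ iff $x_{[0,k)}=y_{[0,k)}$ and $P_l(\sigma^k(x))=P_l(\sigma^k(y))$; let ${}_kX_l=X/\overset{k,l}{\sim}$ (finite, discrete) with classes ${}_k[x]_l$. $\widetilde{X}$ is the projective limit of $({}_kX_l)_{(k,l)\in\mathcal{I}}$ under the maps ${}_{k'}[x]_{l'}\mapsto{}_k[x]_l$ for $(k,l)\preceq(k',l')$, with the projective limit topology. The shift $\sigma_{\widetilde{X}}(\tilde{x})_{(k,l)}={}_k[\sigma(z)]_l$ with $z$ any representative of $\tilde{x}_{(k+1,l+1)}$; $\imath(x)=({}_k[x]_l)_{(k,l)\in\mathcal{I}}$.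 *)

From mathcomp Require Import all_boot.
Set Implicit Arguments. Unset Strict Implicit. Unset Printing Implicit Defensive.

Section Shift.
Variable A : finType.

Definition seqN := nat -> A.

Definition shift (x : seqN) : seqN := fun n => x n.+1.

Definition window (x : seqN) (i n : nat) : seq A := mkseq (fun j => x (i + j)) n.

Definition concat (mu : seq A) (x : seqN) : seqN :=
  fun n => if n < size mu then nth (x 0) mu n else x (n - size mu).

Definition closedN (X : seqN -> Prop) : Prop :=
  forall x, (forall n, exists y, X y /\ forall i, i < n -> y i = x i) -> X x.

Definition subshift (X : seqN -> Prop) : Prop :=
  closedN X /\ forall x, X x -> X (shift x).

Definition shift_onto (X : seqN -> Prop) : Prop :=
  (forall x, X x -> X (shift x)) /\
  (forall x, X x -> exists y, X y /\ shift y = x).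

Definition lang (X : seqN -> Prop) (mu : seq A) : Prop :=
  exists x i, X x /\ mu = window x i (size mu).

Definition Spl (X : seqN -> Prop) (x : seqN) : Prop :=
  X x /\ exists y z, X y /\ X z /\ y <> z /\ shift y = x /\ shift z = x.

Definition periodic (x : seqN) : Prop :=
  exists n, 1 <= n /\ iter n shift x = x.

Definition finite_set (P : seqN -> Prop) : Prop :=
  exists s : seq seqN, forall x, P x -> exists2 i, i < size s & nth x s i = x.

Definition Pl (X : seqN -> Prop) (l : nat) (x : seqN) (mu : seq A) : Prop :=
  lang X mu /\ size mu = l /\ X (concat mu x).

Definition klrel (X : seqN -> Prop) (k l : nat) (x y : seqN) : Prop :=
  window x 0 k = window y 0 k /\
  forall mu, Pl X l (iter k shift x) mu <-> Pl X l (iter k shift y) mu.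

Definition inI (k l : nat) : Prop := k <= l.
Definition preceq (k l k' l' : nat) : Prop := k <= k' /\ l - k <= l' - k'.

(* Elements of the projective limit X~ are represented by families of
   representatives z k l in X of the classes _k[z k l]_l, (k,l) in I,
   that are compatible under the bonding maps. *)
Definition Xtilde (X : seqN -> Prop) (z : nat -> nat -> seqN) : Prop :=
  (forall k l, inI k l -> X (z k l)) /\
  (forall k l k' l', inI k l -> inI k' l' -> preceq k l k' l' ->
     klrel X k l (z k' l') (z k l)).

Definition teq (X : seqN -> Prop) (z z' : nat -> nat -> seqN) : Prop :=
  forall k l, inI k l -> klrel X k l (z k l) (z' k l).

Definition imath (x : seqN) : nat -> nat -> seqN := fun _ _ => x.

(* t is isolated in X~ for the projective limit topology: some basic open
   set (finitely many coordinates fixed) contains only t. *)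
Definition isolated_tilde (X : seqN -> Prop) (t : nat -> nat -> seqN) : Prop :=
  exists F : seq (nat * nat),
    (forall p, p \in F -> inI p.1 p.2) /\
    forall z, Xtilde X z ->
      (forall p, p \in F -> klrel X p.1 p.2 (z p.1 p.2) (t p.1 p.2)) ->
      teq X z t.

End Shift.

(** Separate [x] from the finitely many other points of [Sp_l(X, sigma)] by
    a prefix of some length [K].  If [y] is [(K, K+1)]-equivalent to [x],
    then the two distinct preimages [w1 w2] of [x] can be grafted onto [y]:
    the word [w_[0, K+1)] lies in [P_(K+1)(sigma^K x) = P_(K+1)(sigma^K y)],
    so [w_[0, K+1) sigma^K y] is a point of [X] mapped by [sigma] to [y].
    Hence [y] is again in [Sp_l(X, sigma)], and [y = x] since they share the
    prefix of length [K].  Consequently the single coordinate [(K, K+1)]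
    pins down [imath x] in the projective limit: every coordinate of a
    compatible family is dominated by one at which it must equal [x].
    Only the finiteness of [Sp_l(X, sigma)] is needed for this. *)
From Stdlib Require Import FunctionalExtensionality Classical.
From mathcomp Require Import all_boot zify.

Set Implicit Arguments. Unset Strict Implicit.

Section Subshift.
Variable A : finType.
Implicit Types (X : seqN A -> Prop) (x y w : seqN A).

Lemma iter_shiftE k x n : iter k (@shift A) x n = x (k + n).
Proof. by elim: k n => [|k IH] n //=; rewrite /shift IH addSnnS. Qed.

Lemma window0_eq_nth x y k n :
  window x 0 k = window y 0 k -> n < k -> x n = y n.
Proof.
move=> exy ltnk; have := congr1 (fun s => nth (x 0) s n) exy.
by rewrite /window !nth_mkseq.
Qed.

Lemma klrel_sym X k l x y : klrel X k l x y -> klrel X k l y x.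
Proof. by case=> ewin ePl; split=> // mu; rewrite ePl. Qed.

Lemma klrel_trans X k l x y w :
  klrel X k l x y -> klrel X k l y w -> klrel X k l x w.
Proof.
by case=> exy Pxy [eyw Pyw]; split; [rewrite exy | move=> mu; rewrite Pxy].
Qed.

Lemma preceq_directed k l k' l' : exists k1 l1,
  [/\ inI k1 l1, preceq k l k1 l1 & preceq k' l' k1 l1].
Proof.
exists (maxn k k'), (maxn k k' + maxn (l - k) (l' - k')).
by rewrite /inI /preceq addKn !leq_maxl !leq_maxr leq_addr.
Qed.

Lemma prefix_separation x (s : seq (seqN A)) : exists K, forall i d,
  i < size s -> (forall n, n < K -> nth d s i n = x n) -> nth d s i = x.
Proof.
elim: s => [|w s [K IH]]; first by exists 0.
have [->|nwx] := classic (w = x).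
  by exists K => -[|i] d //= /IH; apply.
have [m nwxm] : exists m, w m <> x m.
  apply: NNPP => agree; apply/nwx/functional_extensionality => n.
  by apply: NNPP => nwxn; apply: agree; exists n.
exists (maxn K m.+1) => -[|i] d /=.
  by move=> _ /(_ m); rewrite leq_max ltnSn orbT => /(_ isT).
move=> /IH sep agree; apply: sep => n ltnK.
by apply: agree; rewrite leq_max ltnK.
Qed.

Lemma finite_set_prefix_separation P x : finite_set P ->
  exists K, forall y, P y -> window y 0 K = window x 0 K -> y = x.
Proof.
case=> s enum_s; have [K sep] := prefix_separation x s.
exists K => y Py ewin; have [i lti enth] := enum_s y Py.
rewrite -enth; apply: sep => // n ltnK; rewrite enth.
exact: window0_eq_nth ewin ltnK.
Qed.

Lemma eq_shift_head w1 w2 : shift w1 = shift w2 -> w1 0 = w2 0 -> w1 = w2.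
Proof.
move=> esh e0; apply: functional_extensionality => -[|n] //.
exact: (congr1 (fun f => f n) esh).
Qed.

(* [w_[0, K+1) sigma^K y], a preimage of [y] whenever [y_[0, K) = (sigma w)_[0, K)]. *)
Definition graft K w y : seqN A := concat (window w 0 K.+1) (iter K (@shift A) y).

Lemma graftE K w y n :
  graft K w y n = if n < K.+1 then w n else y (K + (n - K.+1)).
Proof.
rewrite /graft /concat size_mkseq; case: ifP => ltnK.
  by rewrite nth_mkseq.
by rewrite iter_shiftE.
Qed.

Lemma shift_graft K w y :
  window y 0 K = window (shift w) 0 K -> shift (graft K w y) = y.
Proof.
move=> ewin; apply: functional_extensionality => n.
rewrite /shift graftE ltnS; case: ltnP => [ltnK | leKn].
  by rewrite (window0_eq_nth ewin ltnK).
by congr y; lia.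
Qed.

Lemma graft_shift K w : graft K w (shift w) = w.
Proof.
apply: functional_extensionality => n.
by rewrite graftE /shift; case: ltnP => // leKn; congr w; lia.
Qed.

Lemma graft_in X K w y : X w -> klrel X K K.+1 y (shift w) -> X (graft K w y).
Proof.
move=> Xw [_ ePl].
suff: Pl X K.+1 (iter K (@shift A) (shift w)) (window w 0 K.+1) by case/ePl=> _ [].
have sz : size (window w 0 K.+1) = K.+1 by rewrite size_mkseq.
split; last by split=> //; have := graft_shift K w; rewrite /graft => ->.
by exists w, 0; rewrite sz.
Qed.

Lemma Spl_klrel X K x y : Spl X x -> X y -> klrel X K K.+1 y x -> Spl X y.
Proof.
case=> _ [w1 [w2 [Xw1 [Xw2 [nw12 [<- ew12]]]]]] Xy yx.
split=> //; exists (graft K w1 y), (graft K w2 y).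
have yx2 : klrel X K K.+1 y (shift w2) by rewrite ew12.
split; first exact: graft_in.
split; first exact: graft_in.
split.
  move=> eg; apply/nw12/eq_shift_head => //.
  by have := congr1 (fun f => f 0) eg; rewrite !graftE.
by split; apply: shift_graft; [case: yx | case: yx2].
Qed.

End Subshift.

Theorem proposition3p4 (A : finType) (X : seqN A -> Prop) :
  subshift X -> shift_onto X ->
  finite_set (Spl X) -> (forall x, Spl X x -> ~ periodic x) ->
  forall x, Spl X x -> isolated_tilde X (imath x).
Proof.
move=> _ _ finSp _ x Spx.
have [K sepK] := finite_set_prefix_separation x finSp.
have eq_of_klrel y : X y -> klrel X K K.+1 y x -> y = x.
  move=> Xy yx; apply: sepK; first exact: Spl_klrel Spx Xy yx.
  by case: yx.
exists [:: (K, K.+1)]; split=> [p | z [Xz compat_z] zK k l kl].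
  by rewrite inE => /eqP ->; rewrite /inI /=.
have [k1 [l1 [I1 kl_le K_le]]] := preceq_directed k l K K.+1.
have zx : z k1 l1 = x.
  apply: eq_of_klrel; first exact: Xz.
  exact: klrel_trans (compat_z _ _ _ _ (leqnSn K) I1 K_le) (zK _ (mem_head _ _)).
by apply: klrel_sym; rewrite -zx; apply: compat_z.
Qed.
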